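(* For any pure $n$-qubit state $\psi$ and any $0<\tau<1$, $F_\psi(\tau)\le\dfrac{M_1(\psi)}{\log_2(1/\tau)}$.
   Context: Pauli strings $P_x$, $x\in\{0,1\}^{2n}$, are the $n$-qubit Hermitian Pauli strings; $\alpha_\psi(x)=\mathrm{tr}(\psi P_x)$; the Pauli distribution is $p_\psi(x)=\alpha_\psi(x)^2/2^n$. The CDF is $F_\psi(\tau)=\sum_{x:\,\alpha_\psi(x)^2<\tau}p_\psi(x)$. $M_1(\psi)=H_1(p_\psi)-n$, where $H_1(p)=-\sum_xp(x)\log_2p(x)$. *)

From HB Require Import structures.
From mathcomp Require Import all_boot all_order all_algebra.
From mathcomp Require Import complex.
From mathcomp Require Import reals exp.
Set Implicit Arguments. Unset Strict Implicit. Unset Printing Implicit Defensive.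
Import Order.TTheory GRing.Theory Num.Theory ComplexField.
Local Open Scope ring_scope.
Local Open Scope complex_scope.

Definition basis (n : nat) := {ffun 'I_n -> bool}.

(* Pauli labels x in {0,1}^{2n}: for each qubit i a pair (a_i, b_i);
   (false,false)=I, (true,false)=X, (false,true)=Z, (true,true)=Y. *)
Definition pauli_label (n : nat) := {ffun 'I_n -> bool * bool}.

Definition pauli1 (R : rcfType) (ab : bool * bool) (u v : bool) : R[i] :=
  match ab with
  | (false, false) => if u == v then 1 else 0
  | (true, false) => if u != v then 1 else 0
  | (false, true) => if u == v then (if u then -1 else 1) else 0
  | (true, true) => if u != v then (if u then 'i else - 'i) else 0
  end.

(* entry (u,v) of the n-qubit Pauli string P_x = tensor product *)
Definition pauli (R : rcfType) (n : nat) (x : pauli_label n) (u v : basis n) : R[i] :=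
  \prod_(k < n) pauli1 R (x k) (u k) (v k).

Definition is_pure_state (R : rcfType) (n : nat) (psi : basis n -> R[i]) : Prop :=
  \sum_(u : basis n) `|psi u| ^+ 2 = 1.

(* alpha_psi(x) = tr(|psi><psi| P_x) = <psi|P_x|psi>  (real, P_x Hermitian) *)
Definition alpha (R : rcfType) (n : nat) (psi : basis n -> R[i]) (x : pauli_label n) : R :=
  complex.Re (\sum_(u : basis n) \sum_(v : basis n) (psi u)^* * pauli R x u v * psi v).

Definition pauli_dist (R : rcfType) (n : nat) (psi : basis n -> R[i]) (x : pauli_label n) : R :=
  alpha psi x ^+ 2 / 2 ^+ n.

Definition log2 (R : realType) (t : R) : R := ln t / ln 2.

(* Shannon entropy in bits, with the convention 0 log 0 = 0 *)
Definition H1 (R : realType) (T : finType) (p : T -> R) : R :=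
  - \sum_(x : T | 0 < p x) p x * log2 (p x).

Definition M1 (R : realType) (n : nat) (psi : basis n -> R[i]) : R :=
  H1 (pauli_dist psi) - n%:R.

Definition pauli_cdf (R : realType) (n : nat) (psi : basis n -> R[i]) (tau : R) : R :=
  \sum_(x : pauli_label n | alpha psi x ^+ 2 < tau) pauli_dist psi x.

From HB Require Import structures.
From mathcomp Require Import all_boot all_order all_algebra.
From mathcomp Require Import complex.
From mathcomp Require Import reals exp.
From mathcomp Require Import ring.
Import Order.TTheory GRing.Theory Num.Theory.
Local Open Scope ring_scope.
Set Implicit Arguments. Unset Strict Implicit. Unset Printing Implicit Defensive.

(* A Pauli string has exactly one unimodular entry in each row and column, so
   the Schur test gives |alpha(x)| <= 1; and the Pauli strings are orthogonal
   with squared norm 2^n, so by Parseval sum_x alpha(x)^2 = 2^n and p_psi is a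
   probability distribution.  Hence M_1(psi) is the p_psi-expectation of
   -log2 alpha(x)^2, a nonnegative quantity exceeding log2(1/tau) on the event
   alpha(x)^2 < tau, and Markov's inequality bounds the probability F_psi(tau)
   of that event by M_1(psi) / log2(1/tau). *)


Section QuadraticForm.
Variables (C : numClosedFieldType) (T : finType).

Definition qform (A : T -> T -> C) (psi : T -> C) : C :=
  \sum_u \sum_v (psi u)^* * A u v * psi v.

Definition hermitian (A : T -> T -> C) := forall u v, (A u v)^* = A v u.

Lemma qform_conj A psi : hermitian A -> (qform A psi)^* = qform A psi.
Proof.
move=> hA; rewrite /qform rmorph_sum exchange_big; apply: eq_bigr => v _.
rewrite rmorph_sum; apply: eq_bigr => u _.
rewrite !rmorphM /= conjCK hA; ring.
Qed.

Lemma norm_qform_le1 A psi :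
    (forall u, \sum_v `|A u v| <= 1) -> (forall v, \sum_u `|A u v| <= 1) ->
  \sum_u `|psi u| ^+ 2 = 1 -> `|qform A psi| <= 1.
Proof.
move=> rowA colA psi1.
(* AM-GM, |psi u| |psi v| <= (|psi u|^2 + |psi v|^2) / 2, splits the double sum
   into a row part and a column part, each at most 1/2. *)
have half_mass (B : T -> T -> C) : (forall u, \sum_v `|B u v| <= 1) ->
    \sum_u \sum_v `|B u v| * (`|psi u| ^+ 2 / 2) <= 1 / 2.
  move=> rowB; have -> : 1 / 2 = \sum_u `|psi u| ^+ 2 / 2 by rewrite -mulr_suml psi1.
  apply: ler_sum => u _; rewrite -mulr_suml mulrC ler_piMr ?divr_ge0 ?exprn_ge0 //.
rewrite /qform; apply: (le_trans (ler_norm_sum _ _ _)).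
apply: le_trans (_ : \sum_u \sum_v `|A u v| * ((`|psi u| ^+ 2 + `|psi v| ^+ 2) / 2) <= 1).
  apply: ler_sum => u _; apply: (le_trans (ler_norm_sum _ _ _)).
  apply: ler_sum => v _.
  rewrite !normrM norm_conjC mulrAC mulrC ler_wpM2l //.
  by have [] := real_leif_mean_square (normr_real (psi u)) (normr_real (psi v)).
under eq_bigr do under eq_bigr do rewrite mulrDl mulrDr.
under eq_bigr do rewrite big_split /=.
rewrite big_split /= [leRHS](splitr 1) lerD ?half_mass //.
rewrite exchange_big; exact: (half_mass (fun v u => A u v) colA).
Qed.

Lemma qform_pairE A psi :
  qform A psi = \sum_(w : T * T) (psi w.1)^* * psi w.2 * A w.1 w.2.
Proof.
rewrite /qform pair_bigA /=; apply: eq_bigr => -[u v] _ /=; exact: mulrAC.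
Qed.

End QuadraticForm.

Lemma sum_normCK_orthogonal (C : numClosedFieldType) (I T : finType)
    (B : I -> T -> C) (c : C) (f : T -> C) :
    (forall w w', \sum_x B x w * (B x w')^* = c * (w == w')%:R) ->
  \sum_x `|\sum_w f w * B x w| ^+ 2 = c * \sum_w `|f w| ^+ 2.
Proof.
move=> orthB.
have expand x : `|\sum_w f w * B x w| ^+ 2 =
    \sum_w \sum_w' f w * (f w')^* * (B x w * (B x w')^*).
  rewrite normCK rmorph_sum mulr_suml; apply: eq_bigr => w _.
  rewrite mulr_sumr; apply: eq_bigr => w' _.
  by rewrite rmorphM; ring.
under eq_bigr do rewrite expand.
rewrite exchange_big mulr_sumr; apply: eq_bigr => w _.
rewrite exchange_big (bigD1 w) //= -mulr_sumr orthB eqxx mulr1 big1 ?addr0.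
  by rewrite normCK mulrC.
by move=> w' /negPf w'w; rewrite -mulr_sumr orthB eq_sym w'w mulr0 mulr0.
Qed.

Lemma prodr_mul_natb (R : comPzSemiRingType) n (c : R) (b : 'I_n -> bool) :
  \prod_k (c * (b k)%:R) = c ^+ n * [forall k, b k]%:R.
Proof.
rewrite big_split /= prodr_const card_ord; congr (_ * _).
have [/forallP bT | /forallPn [k /negbTE bk]] := boolP [forall k, b k].
  by rewrite big1 // => k _; rewrite bT.
by rewrite (bigD1 k) //= bk mul0r.
Qed.

Lemma eq_pair_ffunE n (T : finType) (w w' : {ffun 'I_n -> T} * {ffun 'I_n -> T}) :
  [forall k, (w.1 k, w.2 k) == (w'.1 k, w'.2 k)] = (w == w').
Proof.
case: w w' => [u v] [u' v'] /=.
apply/forallP/eqP => [wk | [-> ->] k //].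
by congr pair; apply/ffunP => k; have /eqP [] := wk k.
Qed.

Section Pauli.
Variable R : rcfType.

Lemma pauli1_hermitian ab : hermitian (pauli1 R ab).
Proof.
move=> u v; case: ab => -[] []; case: u; case: v.
all: by apply/eqP; rewrite eq_complex /= ?oppr0 ?opprK ?eqxx.
Qed.

Lemma pauli1_row_norm ab u : \sum_b `|pauli1 R ab u b| = 1.
Proof.
rewrite big_bool; case: ab => -[] []; case: u => /=.
all: rewrite ?normrN ?normr0 ?normr1 ?add0r ?addr0 //.
all: by rewrite normc_def /= expr0n expr1n add0r sqrtr1.
Qed.

Lemma pauli1_orthogonal (w w' : bool * bool) :
  \sum_ab pauli1 R ab w.1 w.2 * (pauli1 R ab w'.1 w'.2)^* = 2 * (w == w')%:R.
Proof.
case: w w' => [u v] [u' v'] /=.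
transitivity (\sum_a \sum_b pauli1 R (a, b) u v * (pauli1 R (a, b) u' v')^*).
  by rewrite pair_bigA; apply: eq_bigr => -[].
rewrite !big_bool /=; case: u; case: v; case: u'; case: v' => /=.
all: apply/eqP; rewrite eq_complex /= ?oppr0 ?opprK ?eqxx.
all: by apply/andP; split; apply/eqP; ring.
Qed.

Variable n : nat.

Lemma pauli_hermitian (x : pauli_label n) : hermitian (pauli R x).
Proof. by move=> u v; rewrite rmorph_prod; apply: eq_bigr => k _; apply: pauli1_hermitian. Qed.

Lemma pauli_row_norm (x : pauli_label n) u : \sum_v `|pauli R x u v| = 1.
Proof.
under eq_bigr do rewrite normr_prod.
rewrite -(bigA_distr_bigA (fun k b => `|pauli1 R (x k) (u k) b|)).
by rewrite big1 // => k _; apply: pauli1_row_norm.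
Qed.

Lemma pauli_col_norm (x : pauli_label n) v : \sum_u `|pauli R x u v| = 1.
Proof.
rewrite -(pauli_row_norm x v); apply: eq_bigr => u _.
by rewrite -pauli_hermitian norm_conjC.
Qed.

Lemma pauli_orthogonal (w w' : basis n * basis n) :
  \sum_x pauli R x w.1 w.2 * (pauli R x w'.1 w'.2)^* = 2 ^+ n * (w == w')%:R.
Proof.
under eq_bigr do rewrite rmorph_prod -big_split /=.
rewrite -(bigA_distr_bigA (fun k ab =>
  pauli1 R ab (w.1 k) (w.2 k) * (pauli1 R ab (w'.1 k) (w'.2 k))^*)).
under eq_bigr do rewrite (pauli1_orthogonal (_, _) (_, _)).
by rewrite prodr_mul_natb eq_pair_ffunE.
Qed.

End Pauli.

Section PauliSpectrum.
Variables (R : rcfType) (n : nat) (psi : basis n -> R[i]).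
Hypothesis psi_pure : is_pure_state psi.

Lemma alpha_qformE x : (alpha psi x)%:C%C = qform (pauli R x) psi.
Proof. by apply: RRe_real; rewrite CrealE qform_conj //; apply: pauli_hermitian. Qed.

Lemma alpha_sqrE x : (alpha psi x ^+ 2)%:C%C = `|qform (pauli R x) psi| ^+ 2.
Proof. by rewrite -alpha_qformE normCK -[_^*]/(conjc _) conjc_real rmorphXn. Qed.

Lemma sum_alpha_sqr : \sum_x alpha psi x ^+ 2 = 2 ^+ n.
Proof.
apply: (@complexI R); rewrite rmorph_sum /= rmorphXn rmorph_nat.
under eq_bigr do rewrite alpha_sqrE qform_pairE.
rewrite (sum_normCK_orthogonal _ (@pauli_orthogonal R n)).
rewrite -(pair_bigA _ (fun u v => `|(psi u)^* * psi v| ^+ 2)) /=.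
under eq_bigr do under eq_bigr do rewrite normrM exprMn norm_conjC.
under eq_bigr do rewrite -mulr_sumr.
by rewrite -mulr_suml psi_pure !mulr1.
Qed.

Lemma alpha_sqr_le1 x : alpha psi x ^+ 2 <= 1.
Proof.
rewrite -lecR alpha_sqrE expr_le1 //.
by apply: norm_qform_le1 => [u|v|]; rewrite ?pauli_row_norm ?pauli_col_norm.
Qed.

End PauliSpectrum.

Section Log2.
Variable R : realType.

Lemma ln2_gt0 : 0 < ln (2 : R).
Proof. by rewrite ln_gt0 // ltr1n. Qed.

Lemma log2_gt0 (x : R) : 1 < x -> 0 < log2 x.
Proof. by move=> x1; rewrite divr_gt0 ?ln2_gt0 ?ln_gt0. Qed.

Lemma log2_le0 (x : R) : x <= 1 -> log2 x <= 0.
Proof. by move=> x1; rewrite pmulr_lle0 ?ln_le0 ?invr_gt0 ?ln2_gt0. Qed.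

Lemma ler_log2 : {in Num.pos &, {mono @log2 R : x y / x <= y}}.
Proof. by move=> x y x0 y0; rewrite ler_pM2r ?invr_gt0 ?ln2_gt0 // ler_ln. Qed.

Lemma log2V (x : R) : 0 < x -> log2 x^-1 = - log2 x.
Proof. by move=> x0; rewrite /log2 lnV ?mulNr. Qed.

Lemma log2_div (x y : R) : 0 < x -> 0 < y -> log2 (x / y) = log2 x - log2 y.
Proof. by move=> x0 y0; rewrite /log2 ln_div ?mulrBl. Qed.

Lemma log2_expr2n n : log2 (2 ^+ n : R) = n%:R.
Proof. by rewrite /log2 lnXn // mulrnAl divff // gt_eqF ?ln2_gt0. Qed.

End Log2.

Lemma markov_sum (R : numDomainType) (T : finType) (P : pred T) (p g : T -> R) (c : R) :
    (forall x, 0 <= p x) -> (forall x, 0 < p x -> 0 <= g x) ->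
    (forall x, P x -> 0 < p x -> c <= g x) ->
  (\sum_(x | P x) p x) * c <= \sum_(x | 0 < p x) p x * g x.
Proof.
move=> p_ge0 g_ge0 g_ge_c; rewrite mulr_suml big_mkcond [leRHS]big_mkcond /=.
apply: ler_sum => x _; case: ifP => Px; case: ifP => px.
- by rewrite ler_wpM2l ?g_ge_c.
- by move/negbT: px; rewrite lt_def p_ge0 andbT negbK => /eqP ->; rewrite mul0r.
- by rewrite mulr_ge0 ?g_ge0.
- exact: lexx.
Qed.

Lemma H1_normalized (R : realType) (T : finType) (a : T -> R) (N : R) :
    0 < N -> (forall x, 0 <= a x) -> \sum_x a x = N ->
  H1 (fun x => a x / N) = log2 N + \sum_(x | 0 < a x / N) a x / N * - log2 (a x).
Proof.
move=> N_gt0 a_ge0 sum_a.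
have support_mass : \sum_(x | 0 < a x / N) a x / N = 1.
  transitivity (\sum_x a x / N); last by rewrite -mulr_suml sum_a divff ?lt0r_neq0.
  rewrite big_mkcond; apply: eq_bigr => x _; case: ifPn => // px.
  by move: px; rewrite lt_def divr_ge0 ?(ltW N_gt0) // andbT negbK => /eqP ->.
rewrite /H1 addrC -[X in _ + X]mulr1 -support_mass mulr_sumr -big_split -sumrN /=.
apply: eq_bigr => x ax_pos.
have ax : 0 < a x by move: ax_pos; rewrite pmulr_lgt0 ?invr_gt0.
rewrite log2_div //; ring.
Qed.

Lemma M1_pauli_expectation (R : realType) n (psi : basis n -> R[i]) :
    is_pure_state psi ->
  M1 psi = \sum_(x | 0 < pauli_dist psi x) pauli_dist psi x * - log2 (alpha psi x ^+ 2).
Proof.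
move=> psi_pure; rewrite /M1 (@H1_normalized _ _ (fun x => alpha psi x ^+ 2) (2 ^+ n)).
- by rewrite log2_expr2n addrAC subrr add0r.
- by rewrite exprn_gt0.
- by move=> x; rewrite sqr_ge0.
- exact: sum_alpha_sqr.
Qed.

Theorem lemma3 (R : realType) (n : nat) (psi : basis n -> R[i])
  (hpsi : is_pure_state psi) (tau : R) (htau0 : 0 < tau) (htau1 : tau < 1) :
  pauli_cdf psi tau <= M1 psi / log2 (tau^-1).
Proof.
have alpha_gt0 x : 0 < pauli_dist psi x -> 0 < alpha psi x ^+ 2.
  by rewrite /pauli_dist pmulr_lgt0 // invr_gt0 exprn_gt0.
rewrite /pauli_cdf ler_pdivlMr ?log2_gt0 ?invf_gt1 // (M1_pauli_expectation hpsi).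
apply: markov_sum => [x | x _ | x a_lt_tau /alpha_gt0 a_gt0].
- by rewrite /pauli_dist divr_ge0 ?sqr_ge0 ?exprn_ge0.
- by rewrite oppr_ge0 log2_le0 ?alpha_sqr_le1.
- by rewrite -log2V // ler_log2 ?posrE ?invr_gt0 // lef_pV2 ?posrE ?ltW.
Qed.
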